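(* Let $\mathcal{G}=\langle G_1,\dots,G_L\rangle$ be a non-strict temporal graph with vertex set $V$ in which every layer consists of exactly two components and no two consecutive layers have the same partition. If for some $i$ with $2\le i\le L-1$ the transition from step $i-1$ to step $i$ is free and the transition from step $i$ to step $i+1$ is restricted, then for every $s\in V$ there is a non-strict exploration schedule starting at $s$.
   Context: A non-strict temporal graph $\mathcal{G}=\langle G_1,\dots,G_L\rangle$ with vertex set $V$ is a sequence of partitions $G_t$ of $V$ into components. A non-strict temporal walk starting at $v$ at time $t_1$ is a sequence of components $C_{t_1},\dots,C_{t_l}$ with $t_{j+1}=t_j+1$, $C_{t_j}\in G_{t_j}$, $C_{t_j}\cap C_{t_{j+1}}\neq\emptyset$, $v\in C_{t_1}$, $t_l\le L$; it visits $\bigcup_j C_{t_j}$. A non-strict exploration schedule starting at $s$ is such a walk starting at $s$ at time $1$ that visits all of $V$. For $G_i=\{A_i,B_i\}$, $G_{i+1}=\{A_{i+1},B_{i+1}\}$, the transition from step $i$ to $i+1$ is free if $A_i\cap A_{i+1}$, $A_i\cap B_{i+1}$, $B_i\cap A_{i+1}$, $B_i\cap B_{i+1}$ are all non-empty, and restricted if exactly one of them is empty. *)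

From mathcomp Require Import all_boot.
Set Implicit Arguments. Unset Strict Implicit. Unset Printing Implicit Defensive.

(* Indices outside 1..L are ignored. *)
Definition temporal_graph (V : finType) (G : nat -> {set {set V}}) (L : nat) : Prop :=
  forall t, 1 <= t <= L -> partition (G t) [set: V].

Definition two_component_layers (V : finType) (G : nat -> {set {set V}}) (L : nat) : Prop :=
  forall t, 1 <= t <= L -> #|G t| = 2.

Definition no_repeated_layers (V : finType) (G : nat -> {set {set V}}) (L : nat) : Prop :=
  forall t, 1 <= t < L -> G t != G t.+1.

Definition free_transition (V : finType) (G : nat -> {set {set V}}) (i : nat) : Prop :=
  forall C D, C \in G i -> D \in G i.+1 -> C :&: D != set0.

Definition restricted_transition (V : finType) (G : nat -> {set {set V}}) (i : nat) : Prop :=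
  #|[set CD in setX (G i) (G i.+1) | CD.1 :&: CD.2 == set0]| = 1.

(* A non-strict temporal walk starting at s at time 1, given as the list of
   components cs = [C_1; ...; C_l] (C_j is the (j+1)-th entry, a component of G j),
   with l >= 1, l <= L, consecutive components intersecting, s in C_1. *)
Definition temporal_walk_from_1 (V : finType) (G : nat -> {set {set V}}) (L : nat)
    (s : V) (cs : seq {set V}) : Prop :=
  [/\ 0 < size cs, size cs <= L,
      (forall j, j < size cs -> nth set0 cs j \in G j.+1),
      (forall j, j.+1 < size cs -> nth set0 cs j :&: nth set0 cs j.+1 != set0)
    & s \in nth set0 cs 0].

Definition visited (V : finType) (cs : seq {set V}) : {set V} :=
  \bigcup_(C <- cs) C.

Definition exploration_schedule (V : finType) (G : nat -> {set {set V}}) (L : nat)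
    (s : V) (cs : seq {set V}) : Prop :=
  temporal_walk_from_1 G L s cs /\ visited cs = [set: V].

From mathcomp Require Import all_boot zify.

Set Implicit Arguments.
Unset Strict Implicit.
Unset Printing Implicit Defensive.

(* A restricted transition i -> i+1 has exactly one disjoint pair (C, E) of
   blocks. As every layer has two blocks, D := ~: C and F := ~: E are blocks of
   steps i and i+1; they cover V since C and E are disjoint, and they meet since
   (D, F) is not the disjoint pair. The explorer stays in the block of s up to
   step i-1, crosses into D at step i (the transition i-1 -> i is free, so that
   block meets D) and into F at step i+1, having visited D :|: F = V. *)

Lemma partition2_setC (V : finType) (P : {set {set V}}) (C : {set V}) :
  partition P [set: V] -> #|P| = 2 -> C \in P -> ~: C \in P.
Proof.
move=> partP cardP PC.
have /eqP/cards1P[D PCD] : #|P :\ C| = 1.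
  by move: cardP; rewrite (cardsD1 C) PC => -[].
have := cover_partition (partitionD1 partP PC).
rewrite PCD cover1 setTD => <-.
by have := set11 D; rewrite -PCD => /setD1P[].
Qed.

Section TwoBlockLayers.

Variables (V : finType) (G : nat -> {set {set V}}) (L : nat).

Lemma restricted_transition_cover i :
  partition (G i) [set: V] -> #|G i| = 2 ->
  partition (G i.+1) [set: V] -> #|G i.+1| = 2 ->
  restricted_transition G i ->
  exists D F, [/\ D \in G i, F \in G i.+1, D :&: F != set0 & D :|: F = [set: V]].
Proof.
move=> partG cardG partG' cardG' /eqP/cards1P[[C E] disjoint_pairs].
have /setIdP[/setXP[/= GC GE] /= /eqP CE0] : (C, E) \in
    [set CD in setX (G i) (G i.+1) | CD.1 :&: CD.2 == set0].
  by rewrite disjoint_pairs set11.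
exists (~: C), (~: E); split.
- exact: partition2_setC GC.
- exact: partition2_setC GE.
- apply: contraNneq (partition_neq0 partG GC) => CE_compl0.
  have : (~: C, ~: E) \in [set CD in setX (G i) (G i.+1) | CD.1 :&: CD.2 == set0].
    by rewrite !inE /= !partition2_setC // CE_compl0 eqxx.
  by rewrite disjoint_pairs => /set1P[CC _]; rewrite -(setICr C) CC setIid.
- by rewrite -setCI CE0 setC0.
Qed.

Lemma temporal_walk_rcons s cs C :
  temporal_walk_from_1 G L s cs -> size cs < L -> C \in G (size cs).+1 ->
  last set0 cs :&: C != set0 -> temporal_walk_from_1 G L s (rcons cs C).
Proof.
case=> cs_gt0 _ cs_layers cs_meet s_first cs_lt GC lastC.
split; rewrite ?size_rcons //.
- move=> j; rewrite ltnS leq_eqVlt nth_rcons => /orP[/eqP->|j_lt].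
    by rewrite ltnn eqxx.
  by rewrite j_lt cs_layers.
- move=> j; rewrite ltnS leq_eqVlt !nth_rcons => /orP[/eqP j_last|j_lt].
    by rewrite -j_last ltnSn ltnn eqxx; move: lastC; rewrite -nth_last -j_last.
  by rewrite j_lt ltnW // cs_meet.
- by rewrite nth_rcons cs_gt0.
Qed.

Lemma visited_rcons (cs : seq {set V}) C : visited (rcons cs C) = visited cs :|: C.
Proof. by rewrite /visited big_rcons. Qed.

Hypothesis HG : temporal_graph G L.

Lemma mem_cover_layer s t : 1 <= t <= L -> s \in cover (G t).
Proof. by move=> t_range; rewrite (cover_partition (HG t_range)) inE. Qed.

Lemma pblock_layer s t : 1 <= t <= L -> pblock (G t) s \in G t.
Proof. by move/(mem_cover_layer s)/pblock_mem. Qed.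

Lemma mem_pblock_layer s t : 1 <= t <= L -> s \in pblock (G t) s.
Proof. by move/(mem_cover_layer s); rewrite mem_pblock. Qed.

Lemma temporal_walk_pblock s k : 0 < k <= L ->
  temporal_walk_from_1 G L s (mkseq (fun t => pblock (G t.+1) s) k).
Proof.
elim: k => [|[|k] IHk] //= k_range.
  by split=> //= [[|[|j]] | ]; rewrite ?pblock_layer ?mem_pblock_layer.
rewrite mkseqS; apply: temporal_walk_rcons; rewrite ?size_mkseq.
- by apply: IHk; lia.
- by lia.
- by apply: pblock_layer; lia.
- rewrite mkseqS last_rcons; apply/set0Pn; exists s.
  by rewrite inE !mem_pblock_layer //; lia.
Qed.

End TwoBlockLayers.

Theorem lemma4 (V : finType) (G : nat -> {set {set V}}) (L : nat)
  (HG : temporal_graph G L)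
  (H2 : two_component_layers G L)
  (Hneq : no_repeated_layers G L)
  (i : nat) (Hi : 2 <= i <= L.-1)
  (Hfree : free_transition G i.-1)
  (Hrestr : restricted_transition G i) :
  forall s : V, exists cs : seq {set V}, exploration_schedule G L s cs.
Proof.
move=> s; case: i Hi Hfree Hrestr => [|[|k]] //= k_range Hfree Hrestr.
have i_range : 1 <= k.+2 <= L by lia.
have i1_range : 1 <= k.+3 <= L by lia.
have [D [F [GD GF DF_meet DF_cover]]] := restricted_transition_cover
  (HG _ i_range) (H2 _ i_range) (HG _ i1_range) (H2 _ i1_range) Hrestr.
set w := mkseq (fun t => pblock (G t.+1) s) k.+1.
have w_walk : temporal_walk_from_1 G L s w.
  by apply: (temporal_walk_pblock HG); lia.
have w_last : last set0 w \in G k.+1.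
  by rewrite /w mkseqS last_rcons; apply: (pblock_layer HG); lia.
exists (rcons (rcons w D) F); split.
  apply: temporal_walk_rcons; rewrite ?size_rcons ?size_mkseq ?last_rcons //; try lia.
  apply: temporal_walk_rcons; rewrite ?size_mkseq //; try lia.
  exact: Hfree.
by rewrite !visited_rcons -setUA DF_cover setUT.
Qed.
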